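(* Let $f:\mathbb{P}^2\to\mathbb{P}^2$ be a holomorphic map and $\ell\subset\mathbb{P}^2$ a line with $f(\ell)\subset\ell$. Suppose that the fixed points $p_1,\dots,p_k$ of $f|_\ell$ are all simple. Let $\lambda_i,\mu_i$ be the eigenvalues of $Df|_{p_i}$, with $\lambda_i$ the eigenvalue tangent to $\ell$ (i.e. $\lambda_i=(f|_\ell)'(p_i)$). Then $$\sum_{i=1}^k\frac{1-\mu_i}{1-\lambda_i}=1.$$
   Context: A fixed point $p$ of $f|_\ell:\ell\to\ell$ is simple if $(f|_\ell)'(p)\neq1$. Since $\ell$ is invariant, $T_p\ell$ is an invariant subspace of $Df|_p$, so the eigenvalue $\lambda_i$ along $\ell$ and the other eigenvalue $\mu_i$ are well defined. *)

(* Holomorphic self-maps of P^2 over an algebraically closed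
   field of characteristic 0 with a norm (numClosedFieldType; C is the
   intended instance), in homogeneous coordinates. *)
From HB Require Import structures.
From mathcomp Require Import all_boot all_order all_algebra.
Set Implicit Arguments. Unset Strict Implicit. Unset Printing Implicit Defensive.
Import Order.TTheory GRing.Theory Num.Theory.
Local Open Scope ring_scope.

Section P2.
Variable R : numClosedFieldType.

Definition cX (v : 'cV[R]_3) : R := v (inord 0) ord0.
Definition cY (v : 'cV[R]_3) : R := v (inord 1) ord0.
Definition cZ (v : 'cV[R]_3) : R := v (inord 2) ord0.

(* A homogeneous polynomial of degree d in X,Y,Z is given by its coefficients
   c a b of the monomials X^a Y^b Z^(d-a-b), a + b <= d. *)
Definition heval (d : nat) (c : nat -> nat -> R) (v : 'cV[R]_3) : R :=
  \sum_(a < d.+1) \sum_(b < (d - a).+1)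
     c a b * cX v ^+ a * cY v ^+ b * cZ v ^+ (d - a - b).

Definition dmon (j : 'I_3) (a b e : nat) (v : 'cV[R]_3) : R :=
  match nat_of_ord j with
  | 0 => a%:R * cX v ^+ a.-1 * cY v ^+ b * cZ v ^+ e
  | 1 => cX v ^+ a * (b%:R * cY v ^+ b.-1) * cZ v ^+ e
  | _ => cX v ^+ a * cY v ^+ b * (e%:R * cZ v ^+ e.-1)
  end.

Definition hpart (d : nat) (c : nat -> nat -> R) (j : 'I_3) (v : 'cV[R]_3) : R :=
  \sum_(a < d.+1) \sum_(b < (d - a).+1) c a b * dmon j a b (d - a - b) v.

Definition Fmap (d : nat) (F : 'I_3 -> nat -> nat -> R) (v : 'cV[R]_3) : 'cV[R]_3 :=
  \col_i heval d (F i) v.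
Definition Jac (d : nat) (F : 'I_3 -> nat -> nat -> R) (v : 'cV[R]_3) : 'M[R]_3 :=
  \matrix_(i, j) hpart d (F i) j v.

(* F defines a holomorphic map P^2 -> P^2: no common zero besides 0 *)
Definition holo_map d F : Prop := forall v, Fmap d F v = 0 -> v = 0.

(* the line l = {[v] | a v = 0}, a a nonzero linear form *)
Definition lform (a : 'rV[R]_3) (v : 'cV[R]_3) : R := (a *m v) ord0 ord0.

Definition line_invariant d F (a : 'rV[R]_3) : Prop :=
  forall v, v != 0 -> lform a v = 0 -> lform a (Fmap d F v) = 0.

Definition is_fixed d F (v : 'cV[R]_3) : Prop := exists c : R, Fmap d F v = c *: v.

Definition proportional (u v : 'cV[R]_3) : Prop := exists c : R, u = c *: v.

(* Differential of f at a fixed point [p] with F(p) = c p: Df_p is the map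
   induced by M := c^-1 * DF(p) on T_p P^2 = R^3 / R p (M p = d p by Euler).
   lam, mu are the eigenvalues of Df_p (the roots of its characteristic
   polynomial, with multiplicity), lam being the eigenvalue on T_p l = L / R p,
   L = ker a. *)
Definition Df_eigenvalues d F (a : 'rV[R]_3) (p : 'cV[R]_3) (lam mu : R) : Prop :=
  exists c : R, c != 0 /\ Fmap d F p = c *: p /\
    let M := c^-1 *: Jac d F p in
    char_poly M = ('X - (d%:R)%:P) * ('X - lam%:P) * ('X - mu%:P) /\
    exists w : 'cV[R]_3, lform a w = 0 /\ ~ proportional w p /\
      exists t : R, M *m w = lam *: w + t *: p.

End P2.

From HB Require Import structures.
From mathcomp Require Import all_boot all_order all_algebra.
From mathcomp Require Import ring zify.
Import Order.TTheory GRing.Theory Num.Theory.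
Set Implicit Arguments. Unset Strict Implicit. Unset Printing Implicit Defensive.
Local Open Scope ring_scope.

(** Parametrize the invariant line [l] by [x |-> [u + x w]], the point at
    infinity [[w]] being chosen not fixed.  Writing [F(u + x w) = g1(x) u + g2(x) w],
    [f|_l] reads [x |-> g2(x) / g1(x)], so its fixed points are the roots of
    [phi = g2 - X g1], a polynomial of degree exactly [d + 1] with simple roots.
    At a root [r], with [F(u + r w) = c (u + r w)], Euler's identity makes [d]
    the eigenvalue of [c^-1 DF] in the radial direction, so
    [tr DF(u + r w) = c (d + lam + mu)], while [phi'(r) = c (lam - 1)].  Hence
    [(1 - mu) / (1 - lam) = -1 - N(r) / phi'(r)] with
    [N = (d + 2) g1 - tr DF(u + X w)] of degree at most [d], and Lagrange
    interpolation at the [d + 1] roots gives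
    [sum N(r) / phi'(r) = N_d / lead_coef phi = - (d + 2)]; the total is
    [- (d + 1) + (d + 2) = 1]. *)

(** * Polynomials *)

Lemma deriv_mulXsubC_horner (R : comNzRingType) (a : R) (q : {poly R}) :
  (('X - a%:P) * q)^`().[a] = q.[a].
Proof. by rewrite derivM derivXsubC !hornerE subrr; ring. Qed.

Lemma coefM_top (R : comNzRingType) (p q : {poly R}) (m n : nat) :
  (size p <= m.+1)%N -> (size q <= n.+1)%N -> (p * q)`_(m + n) = p`_m * q`_n.
Proof.
move=> sp sq; rewrite coefM (bigD1 (Ordinal (leq_addr n m.+1))) //= addKn.
rewrite big1 ?addr0 // => -[i /= lt_i]; rewrite -val_eqE /= => ne_im.
have [lt_im | lt_mi | eq_im] := ltngtP i m; last by rewrite eq_im eqxx in ne_im.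
- by rewrite [q`__]nth_default ?mulr0 // (leq_trans sq) //; lia.
- by rewrite nth_default ?mul0r // (leq_trans sp) //; lia.
Qed.

Lemma size_polyM_leq_add {R : comNzRingType} {p q : {poly R}} {m n : nat} :
  (size p <= m.+1)%N -> (size q <= n.+1)%N -> (size (p * q)%R <= (m + n).+1)%N.
Proof. by move=> sp sq; rewrite (leq_trans (size_polyMleq _ _)) //; lia. Qed.

Lemma size_exp_linear (R : comNzRingType) (p : {poly R}) (n : nat) :
  (size p <= 2)%N -> (size (p ^+ n)%R <= n.+1)%N.
Proof.
move=> sp; elim: n => [|n IHn]; first by rewrite expr0 size_poly1.
by rewrite exprSr -addn1 size_polyM_leq_add.
Qed.

Lemma coef_exp_top (R : comNzRingType) (p : {poly R}) (n : nat) :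
  (size p <= 2)%N -> (p ^+ n)`_n = p`_1 ^+ n.
Proof.
move=> sp; elim: n => [|n IHn]; first by rewrite !expr0 coefC.
by rewrite !exprSr -addn1 coefM_top ?IHn ?size_exp_linear.
Qed.

Lemma size_prod_XsubC_ord (K : nzRingType) (k : nat) (r : 'I_k -> K) :
  size (\prod_i ('X - (r i)%:P)) = k.+1.
Proof. by rewrite size_prod_XsubC [index_enum _]unlock -enumT size_enum_ord. Qed.

Section Interpolation.
Variables (K : fieldType) (k : nat) (r : 'I_k -> K).
Hypothesis r_inj : injective r.

Let L i := \prod_(j | j != i) ('X - (r j)%:P).

Let L_monic i : L i \is monic.
Proof. exact: monic_prod_XsubC. Qed.

Let size_L i : size (L i) = k.
Proof.
have := size_prod_XsubC_ord r.
rewrite (bigD1 i) //= -/(L i) size_monicM ?monicXsubC ?monic_neq0 ?L_monic //.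
by rewrite size_XsubC add2n => -[].
Qed.

Let L_horner i j : (L i).[r j] = if j == i then \prod_(l | l != i) (r i - r l) else 0.
Proof.
rewrite horner_prod; have [-> | ne_ji] := eqVneq j i.
  by apply: eq_bigr => l _; rewrite hornerXsubC.
by rewrite (bigD1 j) //= hornerXsubC subrr mul0r.
Qed.

Lemma lagrange_top_coef (P : {poly K}) : (size P <= k)%N ->
  \sum_i P.[r i] / \prod_(j | j != i) (r i - r j) = P`_k.-1.
Proof.
move=> sP; pose D i := \prod_(j | j != i) (r i - r j).
have D_neq0 i : D i != 0.
  by apply/prodf_neq0 => j ne_ji; rewrite subr_eq0 (inj_eq r_inj) eq_sym.
pose Q := \sum_i (P.[r i] / D i) *: L i.
have QP : Q = P.
  apply/eqP; rewrite -subr_eq0; apply/eqP.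
  apply: (@roots_geq_poly_eq0 _ _ (map r (enum 'I_k))).
  - apply/allP => _ /mapP [j _ ->]; rewrite /root !hornerE horner_sum.
    rewrite (bigD1 j) //= big1 => [|i ne_ij].
      by rewrite hornerZ L_horner eqxx divfK // addr0 subrr.
    by rewrite hornerZ L_horner eq_sym (negbTE ne_ij) mulr0.
  - by rewrite map_inj_uniq ?enum_uniq.
  - rewrite size_map size_enum_ord (leq_trans (size_polyD _ _)) // geq_max size_polyN sP andbT.
    rewrite (leq_trans (size_sum _ _ _)) //; apply/bigmax_leqP => i _.
    by rewrite (leq_trans (size_scale_leq _ _)) ?size_L.
have L_top i : (L i)`_k.-1 = 1.
  by rewrite -(size_L i) -lead_coefE (monicP (L_monic i)).
by rewrite -[in RHS]QP coef_sum; apply: eq_bigr => i _; rewrite coefZ L_top mulr1.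
Qed.

Lemma sum_horner_div_deriv (c : K) (phi P : {poly K}) :
  c != 0 -> phi = c *: \prod_i ('X - (r i)%:P) -> (size P <= k)%N ->
  \sum_i P.[r i] / phi^`().[r i] = P`_k.-1 / c.
Proof.
move=> c0 -> sP; rewrite -lagrange_top_coef // mulr_suml; apply: eq_bigr => i _.
rewrite derivZ hornerZ (bigD1 i) //= deriv_mulXsubC_horner -/(L i) L_horner eqxx.
by rewrite invfM; ring.
Qed.

End Interpolation.

Lemma prod_simple_roots (K : closedFieldType) (k : nat) (r : 'I_k -> K) (phi : {poly K}) :
  phi != 0 -> injective r ->
  (forall z, root phi z -> exists i, z = r i) -> (forall i, root phi (r i)) ->
  (forall i, phi^`().[r i] != 0) ->
  phi = lead_coef phi *: \prod_i ('X - (r i)%:P).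
Proof.
move=> phi0 r_inj phi_roots root_r simple.
set psi := \prod_i _.
have psi_monic : psi \is monic by apply: monic_prod_XsubC.
have : psi %| phi.
  have -> : psi = \prod_(z <- map r (enum 'I_k)) ('X - z%:P) by rewrite big_map big_enum.
  rewrite uniq_roots_dvdp ?uniq_rootsE //.
    by apply/allP => _ /mapP [i _ ->].
  by rewrite map_inj_uniq ?enum_uniq.
rewrite dvdp_eq => /eqP phiE; set s := phi %/ psi in phiE.
suff [c sE] : exists c, s = c%:P.
  by rewrite phiE sE lead_coefM lead_coefC (monicP psi_monic) mulr1 mul_polyC.
suff /size_poly1P [c _ ->] : size s == 1%N by exists c.
apply: contraT => /closed_rootP [z sz].
have [j zj] : exists j, z = r j by apply: phi_roots; rewrite phiE rootM sz.
have /factor_theorem [q sE] := sz.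
have := simple j; rewrite phiE sE zj /psi (bigD1 j) //=.
set L := \prod_(i | i != j) _.
have -> : q * ('X - (r j)%:P) * (('X - (r j)%:P) * L) =
          ('X - (r j)%:P) * (('X - (r j)%:P) * (q * L)) by ring.
by rewrite deriv_mulXsubC_horner hornerM hornerXsubC subrr mul0r eqxx.
Qed.

Lemma coef2_cubic (R : comNzRingType) (x y z : R) :
  (('X - x%:P) * ('X - y%:P) * ('X - z%:P))`_2 = - (x + y + z).
Proof.
have -> : ('X - x%:P) * ('X - y%:P) * ('X - z%:P) =
    'X ^+ 3 - (x + y + z)%:P * 'X ^+ 2 + (x * y + y * z + z * x)%:P * 'X - (x * y * z)%:P.
  by rewrite !polyCD !polyCM; ring.
rewrite !coefD !coefN !coefCM coefC coefX -!/('X^_) !coefXn /=.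
by rewrite !mulr0 !mulr1; ring.
Qed.

Lemma mxtrace_char_poly3 (R : comNzRingType) (M : 'M[R]_3) (x y z : R) :
  char_poly M = ('X - x%:P) * ('X - y%:P) * ('X - z%:P) -> \tr M = x + y + z.
Proof.
by move=> cpM; apply: oppr_inj; rewrite -coef2_cubic -cpM (char_poly_trace M (isT : 0 < 3)%N).
Qed.

(** * Homogeneous forms in three variables *)

Definition i0 : 'I_3 := inord 0.
Definition i1 : 'I_3 := inord 1.
Definition i2 : 'I_3 := inord 2.

Lemma ord3P (i : 'I_3) : [\/ i = i0, i = i1 | i = i2].
Proof.
by case: i => [[|[|[|m]]] lt_i3] //; [constructor 1 | constructor 2 | constructor 3];
  apply/val_inj; rewrite /= inordK.
Qed.

Lemma big_ord3 (V : nmodType) (f : 'I_3 -> V) : \sum_(j < 3) f j = f i0 + f i1 + f i2.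
Proof.
rewrite !big_ord_recr big_ord0 /= add0r.
by congr (f _ + f _ + f _); apply/val_inj; rewrite /= inordK.
Qed.

Section Coordinates.
Variable R : numClosedFieldType.
Implicit Types (u v : 'cV[R]_3) (a : 'rV[R]_3).

Lemma col3P u v : cX u = cX v -> cY u = cY v -> cZ u = cZ v -> u = v.
Proof.
move=> eX eY eZ; apply/matrixP => i j; rewrite (ord1 j).
by case: (ord3P i) => ->.
Qed.

Lemma cXD u v : cX (u + v) = cX u + cX v. Proof. by rewrite /cX mxE. Qed.
Lemma cYD u v : cY (u + v) = cY u + cY v. Proof. by rewrite /cY mxE. Qed.
Lemma cZD u v : cZ (u + v) = cZ u + cZ v. Proof. by rewrite /cZ mxE. Qed.
Lemma cXZ x v : cX (x *: v) = x * cX v. Proof. by rewrite /cX mxE. Qed.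
Lemma cYZ x v : cY (x *: v) = x * cY v. Proof. by rewrite /cY mxE. Qed.
Lemma cZZ x v : cZ (x *: v) = x * cZ v. Proof. by rewrite /cZ mxE. Qed.

Definition coordE := (cXD, cYD, cZD, cXZ, cYZ, cZZ).

Lemma lformE a v :
  lform a v = a ord0 i0 * cX v + a ord0 i1 * cY v + a ord0 i2 * cZ v.
Proof. by rewrite /lform mxE big_ord3. Qed.

Lemma lformD a u v : lform a (u + v) = lform a u + lform a v.
Proof. by rewrite /lform mulmxDr mxE. Qed.

Lemma lformZ a x v : lform a (x *: v) = x * lform a v.
Proof. by rewrite /lform -scalemxAr mxE. Qed.

Lemma lform0 a : lform a 0 = 0.
Proof. by rewrite /lform mulmx0 mxE. Qed.

Lemma lformBl (a b : 'rV[R]_3) x v : lform (a - x *: b) v = lform a v - x * lform b v.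
Proof. by rewrite /lform mulmxBl -scalemxAl !mxE. Qed.

End Coordinates.

Section HomogeneousForms.
Variables (R : numClosedFieldType) (d : nat) (c : nat -> nat -> R).
Implicit Types (v : 'cV[R]_3) (x g : R).

Lemma hpart0 v : hpart d c i0 v = \sum_(a < d.+1) \sum_(b < (d - a).+1)
  c a b * (a%:R * cX v ^+ a.-1 * cY v ^+ b * cZ v ^+ (d - a - b)).
Proof. by rewrite /hpart /dmon /i0 inordK. Qed.

Lemma hpart1 v : hpart d c i1 v = \sum_(a < d.+1) \sum_(b < (d - a).+1)
  c a b * (cX v ^+ a * (b%:R * cY v ^+ b.-1) * cZ v ^+ (d - a - b)).
Proof. by rewrite /hpart /dmon /i1 inordK. Qed.

Lemma hpart2 v : hpart d c i2 v = \sum_(a < d.+1) \sum_(b < (d - a).+1)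
  c a b * (cX v ^+ a * cY v ^+ b * ((d - a - b)%:R * cZ v ^+ (d - a - b).-1)).
Proof. by rewrite /hpart /dmon /i2 inordK. Qed.

Lemma mulr_natX_pred (n : nat) x : x * (n%:R * x ^+ n.-1) = n%:R * x ^+ n.
Proof. by case: n => [|n]; rewrite ?mul0r ?mulr0 //= exprS; ring. Qed.

Lemma natX_predZ (n : nat) g x :
  n%:R * (g * x) ^+ n.-1 * g = g ^+ n * (n%:R * x ^+ n.-1).
Proof. by case: n => [|n]; rewrite ?mul0r ?mulr0 //= exprMn exprS; ring. Qed.

Lemma hpart_euler v :
  cX v * hpart d c i0 v + cY v * hpart d c i1 v + cZ v * hpart d c i2 v =
  d%:R * heval d c v.
Proof.
rewrite hpart0 hpart1 hpart2 /heval !mulr_sumr -!big_split; apply: eq_bigr => -[a lt_ad] _.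
rewrite !mulr_sumr -!big_split; apply: eq_bigr => -[b lt_bd] _ /=.
have dE : d = (a + b + (d - a - b))%N by move: lt_ad lt_bd => /=; lia.
set X := cX v; set Y := cY v; set Z := cZ v; set e := (d - a - b)%N.
transitivity (c a b * Y ^+ b * Z ^+ e * (X * (a%:R * X ^+ a.-1)) +
  c a b * X ^+ a * Z ^+ e * (Y * (b%:R * Y ^+ b.-1)) +
  c a b * X ^+ a * Y ^+ b * (Z * (e%:R * Z ^+ e.-1))); first ring.
by rewrite !mulr_natX_pred [in d%:R]dE !natrD -/e; ring.
Qed.

Lemma hevalZ g v : heval d c (g *: v) = g ^+ d * heval d c v.
Proof.
rewrite /heval mulr_sumr; apply: eq_bigr => -[a lt_ad] _.
rewrite mulr_sumr; apply: eq_bigr => -[b lt_bd] _ /=.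
have dE : d = (a + b + (d - a - b))%N by move: lt_ad lt_bd => /=; lia.
by rewrite !coordE !exprMn [in g ^+ d]dE !exprD; ring.
Qed.

Lemma hpartZ j g v : hpart d c j (g *: v) * g = g ^+ d * hpart d c j v.
Proof.
case: (ord3P j) => ->; rewrite ?hpart0 ?hpart1 ?hpart2 mulr_suml mulr_sumr;
  apply: eq_bigr => -[a lt_ad] _; rewrite mulr_suml mulr_sumr;
  apply: eq_bigr => -[b lt_bd] _ /=;
  (have dE : d = (a + b + (d - a - b))%N by move: lt_ad lt_bd => /=; lia);
  rewrite !coordE; set e := (d - a - b)%N.
- transitivity (c a b * (g * cY v) ^+ b * (g * cZ v) ^+ e *
     (a%:R * (g * cX v) ^+ a.-1 * g)); first ring.
  by rewrite natX_predZ !exprMn [in g ^+ d]dE !exprD -/e; ring.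
- transitivity (c a b * (g * cX v) ^+ a * (g * cZ v) ^+ e *
     (b%:R * (g * cY v) ^+ b.-1 * g)); first ring.
  by rewrite natX_predZ !exprMn [in g ^+ d]dE !exprD -/e; ring.
- transitivity (c a b * (g * cX v) ^+ a * (g * cY v) ^+ b *
     (e%:R * (g * cZ v) ^+ e.-1 * g)); first ring.
  by rewrite natX_predZ !exprMn [in g ^+ d]dE !exprD -/e; ring.
Qed.

End HomogeneousForms.

(** * Restriction to an affine chart of a line *)

Section Restriction.
Variables (R : numClosedFieldType) (u w : 'cV[R]_3).

Definition chart (x : R) : 'cV[R]_3 := u + x *: w.

Definition chart_coord (i : 'I_3) : {poly R} := (u i ord0)%:P + (w i ord0)%:P * 'X.

Definition hform_restr d (c : nat -> nat -> R) : {poly R} :=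
  \sum_(a < d.+1) \sum_(b < (d - a).+1)
     (c a b)%:P * chart_coord i0 ^+ a * chart_coord i1 ^+ b * chart_coord i2 ^+ (d - a - b).

Definition dmon_restr (j : 'I_3) (a b e : nat) : {poly R} :=
  match nat_of_ord j with
  | 0 => a%:R * chart_coord i0 ^+ a.-1 * chart_coord i1 ^+ b * chart_coord i2 ^+ e
  | 1 => chart_coord i0 ^+ a * (b%:R * chart_coord i1 ^+ b.-1) * chart_coord i2 ^+ e
  | _ => chart_coord i0 ^+ a * chart_coord i1 ^+ b * (e%:R * chart_coord i2 ^+ e.-1)
  end.

Definition hpart_restr d (c : nat -> nat -> R) (j : 'I_3) : {poly R} :=
  \sum_(a < d.+1) \sum_(b < (d - a).+1) (c a b)%:P * dmon_restr j a b (d - a - b).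

Lemma horner_chart_coord0 x : (chart_coord i0).[x] = cX (chart x).
Proof. by rewrite /chart_coord /chart !hornerE /cX !mxE mulrC. Qed.
Lemma horner_chart_coord1 x : (chart_coord i1).[x] = cY (chart x).
Proof. by rewrite /chart_coord /chart !hornerE /cY !mxE mulrC. Qed.
Lemma horner_chart_coord2 x : (chart_coord i2).[x] = cZ (chart x).
Proof. by rewrite /chart_coord /chart !hornerE /cZ !mxE mulrC. Qed.

Definition horner_chart_coord :=
  (horner_chart_coord0, horner_chart_coord1, horner_chart_coord2).

Lemma horner_hform_restr d c x : (hform_restr d c).[x] = heval d c (chart x).
Proof.
rewrite /hform_restr /heval horner_sum; apply: eq_bigr => a _.
rewrite horner_sum; apply: eq_bigr => b _.
by rewrite !hornerM !horner_exp hornerC !horner_chart_coord.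
Qed.

Lemma horner_hpart_restr d c j x : (hpart_restr d c j).[x] = hpart d c j (chart x).
Proof.
rewrite /hpart_restr /hpart horner_sum; apply: eq_bigr => a _.
rewrite horner_sum; apply: eq_bigr => b _.
rewrite hornerM hornerC /dmon_restr /dmon -!polyC_natr.
by case: (nat_of_ord j) => [|[|m]]; rewrite !hornerM !horner_exp hornerC !horner_chart_coord.
Qed.

Lemma size_chart_coord i : (size (chart_coord i) <= 2)%N.
Proof.
rewrite (leq_trans (size_polyD _ _)) // geq_max (leq_trans (size_polyC_leq1 _)) //=.
by rewrite mul_polyC (leq_trans (size_scale_leq _ _)) // size_polyX.
Qed.

Lemma coef_chart_coord i : (chart_coord i)`_1 = w i ord0.
Proof. by rewrite coefD coefC mul_polyC coefZ coefX add0r mulr1. Qed.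

Lemma monomial_restr_top x a b e
    (m := x%:P * chart_coord i0 ^+ a * chart_coord i1 ^+ b * chart_coord i2 ^+ e) :
  (size m <= (a + b + e).+1)%N /\ m`_(a + b + e) = x * cX w ^+ a * cY w ^+ b * cZ w ^+ e.
Proof.
have sx : (size x%:P <= 0.+1)%N := size_polyC_leq1 x.
have se i n : (size (chart_coord i ^+ n)%R <= n.+1)%N by apply/size_exp_linear/size_chart_coord.
split; first by rewrite -[a]add0n !size_polyM_leq_add.
rewrite -[a]add0n !coefM_top ?size_polyM_leq_add // coefC /=.
by rewrite !coef_exp_top ?size_chart_coord // !coef_chart_coord.
Qed.

Lemma hform_restr_top d c :
  (size (hform_restr d c) <= d.+1)%N /\ (hform_restr d c)`_d = heval d c w.
Proof.
have term (a : 'I_d.+1) (b : 'I_(d - a).+1) := monomial_restr_top (c a b) a b (d - a - b).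
have abeE (a : 'I_d.+1) (b : 'I_(d - a).+1) : (a + b + (d - a - b))%N = d.
  by case: a b => [a lt_ad] [b lt_bd] /=; move: lt_bd => /=; lia.
split.
  rewrite (leq_trans (size_sum _ _ _)) //; apply/bigmax_leqP => a _.
  rewrite (leq_trans (size_sum _ _ _)) //; apply/bigmax_leqP => b _.
  by have [+ _] := term a b; rewrite abeE.
rewrite coef_sum; apply: eq_bigr => a _; rewrite coef_sum; apply: eq_bigr => b _.
by have [_ +] := term a b; rewrite abeE.
Qed.

Lemma size_dmon_restr j a b e : (size (dmon_restr j a b e) <= a + b + e)%N.
Proof.
have sn (n : nat) : (size (n%:R : {poly R}) <= 0.+1)%N.
  by rewrite -polyC_natr size_polyC_leq1.
have se i n : (size (chart_coord i ^+ n)%R <= n.+1)%N by apply/size_exp_linear/size_chart_coord.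
rewrite /dmon_restr; case: (nat_of_ord j) => [|[|m]].
- case: a => [|a]; first by rewrite !mul0r size_poly0.
  have := size_polyM_leq_add (size_polyM_leq_add
    (size_polyM_leq_add (sn a.+1) (se i0 a)) (se i1 b)) (se i2 e).
  by move/leq_trans; apply; lia.
- case: b => [|b]; first by rewrite mul0r mulr0 !mul0r size_poly0.
  have := size_polyM_leq_add (size_polyM_leq_add (se i0 a)
    (size_polyM_leq_add (sn b.+1) (se i1 b))) (se i2 e).
  by move/leq_trans; apply; lia.
- case: e => [|e]; first by rewrite mul0r mulr0 size_poly0.
  have := size_polyM_leq_add (size_polyM_leq_add (se i0 a) (se i1 b))
    (size_polyM_leq_add (sn e.+1) (se i2 e)).
  by move/leq_trans; apply; lia.
Qed.

Lemma size_hpart_restr d c j : (size (hpart_restr d c j) <= d)%N.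
Proof.
rewrite (leq_trans (size_sum _ _ _)) //; apply/bigmax_leqP => -[a lt_ad] _.
rewrite (leq_trans (size_sum _ _ _)) //; apply/bigmax_leqP => -[b lt_bd] _ /=.
rewrite (leq_trans (size_polyMleq _ _)) //.
have := size_dmon_restr j a b (d - a - b); have := size_polyC_leq1 (c a b).
by move: lt_ad lt_bd => /=; case: (size (c a b)%:P) => [|[|]] //=; lia.
Qed.

Lemma deriv_chart_coord i : (chart_coord i)^`() = (w i ord0)%:P.
Proof. by rewrite derivD derivC derivM derivC derivX mul0r add0r mulr1 add0r. Qed.

Lemma deriv_hform_restr d c :
  (hform_restr d c)^`() = \sum_(j < 3) (w j ord0)%:P * hpart_restr d c j.
Proof.
rewrite /hform_restr /hpart_restr raddf_sum.
under [RHS]eq_bigr do rewrite mulr_sumr.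
rewrite exchange_big; apply: eq_bigr => a _.
rewrite raddf_sum.
under [RHS]eq_bigr do rewrite mulr_sumr.
rewrite exchange_big; apply: eq_bigr => b _.
rewrite big_ord3 /dmon_restr /i0 /i1 /i2 !inordK //= !derivM !deriv_exp !deriv_chart_coord derivC.
ring.
Qed.

End Restriction.

Section Lift.
Variables (R : numClosedFieldType) (d : nat) (F : 'I_3 -> nat -> nat -> R).
Implicit Types (v : 'cV[R]_3) (g : R).

Lemma FmapZ g v : Fmap d F (g *: v) = g ^+ d *: Fmap d F v.
Proof. by apply/matrixP => i j; rewrite !mxE hevalZ. Qed.

Lemma JacZ g v : g *: Jac d F (g *: v) = g ^+ d *: Jac d F v.
Proof. by apply/matrixP => i j; rewrite !mxE mulrC hpartZ. Qed.

Lemma Jac_euler v : Jac d F v *m v = d%:R *: Fmap d F v.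
Proof.
apply/matrixP => i j; rewrite (ord1 j) !mxE big_ord3 !mxE -hpart_euler.
by rewrite /cX /cY /cZ; ring.
Qed.

Variables (u w : 'cV[R]_3).

Definition restr_form (r : 'rV[R]_3) : {poly R} :=
  \sum_(i < 3) (r ord0 i)%:P * hform_restr u w d (F i).

Definition restr_trace : {poly R} := \sum_(i < 3) hpart_restr u w d (F i) i.

Lemma horner_restr_form r x : (restr_form r).[x] = lform r (Fmap d F (chart u w x)).
Proof.
rewrite /restr_form horner_sum /lform mxE; apply: eq_bigr => i _.
by rewrite hornerM hornerC horner_hform_restr mxE.
Qed.

Lemma horner_deriv_restr_form r x :
  (restr_form r)^`().[x] = lform r (Jac d F (chart u w x) *m w).
Proof.
rewrite /restr_form raddf_sum horner_sum /lform mxE; apply: eq_bigr => i _.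
rewrite /= derivM derivC mul0r add0r hornerM hornerC deriv_hform_restr mxE horner_sum.
congr (_ * _); apply: eq_bigr => j _.
by rewrite hornerM hornerC horner_hpart_restr !mxE mulrC.
Qed.

Lemma restr_form_top r :
  (size (restr_form r) <= d.+1)%N /\ (restr_form r)`_d = lform r (Fmap d F w).
Proof.
split.
  rewrite (leq_trans (size_sum _ _ _)) //; apply/bigmax_leqP => i _.
  rewrite mul_polyC (leq_trans (size_scale_leq _ _)) //.
  by case: (hform_restr_top u w d (F i)).
rewrite coef_sum /lform mxE; apply: eq_bigr => i _.
by rewrite coefCM mxE; case: (hform_restr_top u w d (F i)) => _ ->.
Qed.

Lemma horner_restr_trace x : restr_trace.[x] = \tr (Jac d F (chart u w x)).
Proof.
rewrite /restr_trace /mxtrace horner_sum; apply: eq_bigr => i _.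
by rewrite horner_hpart_restr mxE.
Qed.

Lemma size_restr_trace : (size restr_trace <= d)%N.
Proof.
rewrite (leq_trans (size_sum _ _ _)) //; apply/bigmax_leqP => i _.
exact: size_hpart_restr.
Qed.

End Lift.

(** * Fixed points on the invariant line *)

Lemma Df_eigenvaluesZ (R : numClosedFieldType) d F (a : 'rV[R]_3) p g lam mu :
  g != 0 -> Df_eigenvalues d F a p lam mu -> Df_eigenvalues d F a (g *: p) lam mu.
Proof.
move=> g_neq0 [c [c_neq0 [Fp /= [cp [om [aom [om_np [t Mom]]]]]]]].
have gd_neq0 : g ^+ d != 0 by rewrite expf_neq0.
exists (c * g ^+ d / g); split; first by rewrite !mulf_neq0 ?invr_eq0.
split; first by rewrite FmapZ Fp !scalerA; congr (_ *: _); field.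
have -> : (c * g ^+ d / g)^-1 *: Jac d F (g *: p) = c^-1 *: Jac d F p.
  apply: (scalerI g_neq0); rewrite !scalerA [g / _]mulrC -(scalerA _ g) JacZ scalerA.
  by congr (_ *: _); field; rewrite c_neq0 g_neq0 gd_neq0.
split=> //; exists om; split=> //; split.
  by case=> x omE; apply: om_np; exists (x * g); rewrite -scalerA.
by exists (t / g); rewrite Mom scalerA divfK.
Qed.

Lemma Df_eigenvalues_fixed (R : numClosedFieldType) d F (a : 'rV[R]_3) p lam mu :
  Df_eigenvalues d F a p lam mu -> is_fixed d F p.
Proof. by case=> c [_ [Fp _]]; exists c. Qed.

Section Frames.
Variable R : numClosedFieldType.
Implicit Types (a al be : 'rV[R]_3) (u v w : 'cV[R]_3).

Record line_frame a al be u w : Prop := LineFrame {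
  frame_a_u : lform a u = 0;
  frame_a_w : lform a w = 0;
  frame_al_u : lform al u = 1;
  frame_al_w : lform al w = 0;
  frame_be_u : lform be u = 0;
  frame_be_w : lform be w = 1;
  frame_decomp : forall v, lform a v = 0 -> v = lform al v *: u + lform be v *: w }.

Definition col3 (x y z : R) : 'cV[R]_3 :=
  \col_i (if i == i0 then x else if i == i1 then y else z).
Definition row3 (x y z : R) : 'rV[R]_3 :=
  \row_i (if i == i0 then x else if i == i1 then y else z).

Lemma i1_neq_i0 : (i1 == i0) = false. Proof. by rewrite -val_eqE /= !inordK. Qed.
Lemma i2_neq_i0 : (i2 == i0) = false. Proof. by rewrite -val_eqE /= !inordK. Qed.
Lemma i2_neq_i1 : (i2 == i1) = false. Proof. by rewrite -val_eqE /= !inordK. Qed.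

Lemma col3E x y z : (cX (col3 x y z) = x) * (cY (col3 x y z) = y) * (cZ (col3 x y z) = z).
Proof. by rewrite /cX /cY /cZ !mxE -/i0 -/i1 -/i2 eqxx i1_neq_i0 i2_neq_i0 i2_neq_i1 eqxx. Qed.

Lemma row3E x y z :
  (row3 x y z ord0 i0 = x) * (row3 x y z ord0 i1 = y) * (row3 x y z ord0 i2 = z).
Proof. by rewrite !mxE eqxx i1_neq_i0 i2_neq_i0 i2_neq_i1 eqxx. Qed.

Lemma solve_pivot (x0 x1 x2 a0 a1 a2 : R) : a0 != 0 ->
  a0 * x0 + a1 * x1 + a2 * x2 = 0 -> x0 = x1 * (- a1 / a0) + x2 * (- a2 / a0).
Proof.
move=> a0_neq0 /eqP; rewrite -addrA addr_eq0 => /eqP a0x0.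
by apply: (mulfI a0_neq0); rewrite a0x0; field.
Qed.

Lemma exists_line_frame a : a != 0 -> exists al be u w, line_frame a al be u w.
Proof.
move=> a_neq0; set a0 := a ord0 i0; set a1 := a ord0 i1; set a2 := a ord0 i2.
have : [|| a0 != 0, a1 != 0 | a2 != 0].
  apply: contraR a_neq0; rewrite !negb_or !negbK => /and3P [/eqP a00 /eqP a10 /eqP a20].
  by apply/eqP/matrixP => i j; rewrite (ord1 i) mxE; case: (ord3P j) => ->.
case/or3P => pivot.
- exists (row3 0 1 0), (row3 0 0 1), (col3 (- a1 / a0) 1 0), (col3 (- a2 / a0) 0 1).
  split; rewrite ?lformE ?row3E ?col3E -?/a0 -?/a1 -?/a2; try by field.
  move=> v av0; have eX : cX v = cY v * (- a1 / a0) + cZ v * (- a2 / a0).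
    by apply: solve_pivot pivot _; rewrite -av0 lformE.
  by apply: col3P; rewrite !coordE !lformE !row3E !col3E; [rewrite eX|..]; ring.
- exists (row3 1 0 0), (row3 0 0 1), (col3 1 (- a0 / a1) 0), (col3 0 (- a2 / a1) 1).
  split; rewrite ?lformE ?row3E ?col3E -?/a0 -?/a1 -?/a2; try by field.
  move=> v av0; have eY : cY v = cX v * (- a0 / a1) + cZ v * (- a2 / a1).
    by apply: solve_pivot pivot _; rewrite -av0 lformE -/a0 -/a1 -/a2; ring.
  by apply: col3P; rewrite !coordE !lformE !row3E !col3E; [|rewrite eY|]; ring.
- exists (row3 1 0 0), (row3 0 1 0), (col3 1 0 (- a0 / a2)), (col3 0 1 (- a1 / a2)).
  split; rewrite ?lformE ?row3E ?col3E -?/a0 -?/a1 -?/a2; try by field.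
  move=> v av0; have eZ : cZ v = cX v * (- a0 / a2) + cY v * (- a1 / a2).
    by apply: solve_pivot pivot _; rewrite -av0 lformE -/a0 -/a1 -/a2; ring.
  by apply: col3P; rewrite !coordE !lformE !row3E !col3E; [| |rewrite eZ]; ring.
Qed.

Lemma line_frame_shift a al be u w s : line_frame a al be u w ->
  line_frame a (al - s *: be) be u (w + s *: u).
Proof.
case=> au aw alu alw beu bew dec.
split; rewrite ?lformBl ?lformD ?lformZ ?au ?aw ?alu ?alw ?beu ?bew; try ring.
by move=> v /dec {1}->; rewrite lformBl; apply: col3P; rewrite !coordE; ring.
Qed.

Lemma exists_avoiding (k : nat) (t : 'I_k -> R) : exists s : R, forall i, s != t i.
Proof.
exists (1 + \sum_i `|t i|) => i; apply/eqP => si.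
have : `|t i| <= \sum_j `|t j| by rewrite (bigD1 i) //= lerDl sumr_ge0.
rewrite -si ger0_norm ?addr_ge0 ?sumr_ge0 //.
by rewrite -[leRHS]add0r lerD2r ler10.
Qed.

Lemma line_frame_w_neq0 a al be u w : line_frame a al be u w -> w != 0.
Proof.
case=> _ _ _ _ _ bew _; apply/eqP => w0.
by move: bew; rewrite w0 lform0 => /eqP; rewrite eq_sym oner_eq0.
Qed.

Lemma exists_nonfixed d F a al be u w k (p : 'I_k -> 'cV[R]_3) :
  line_frame a al be u w ->
  (forall v, v != 0 -> lform a v = 0 -> is_fixed d F v -> exists i, proportional v (p i)) ->
  exists s, ~ is_fixed d F (w + s *: u).
Proof.
move=> frame cover.
have [s s_avoids] := exists_avoiding (fun i => lform al (p i) / lform be (p i)).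
exists s => s_fixed; have frame_s := line_frame_shift s frame.
have [i [c Ec]] := cover _ (line_frame_w_neq0 frame_s) (frame_a_w frame_s) s_fixed.
have := congr1 (lform be) Ec; rewrite lformZ (frame_be_w frame_s) => /esym/mulr1_eq beE.
have := congr1 (lform al) Ec; rewrite lformZ lformD lformZ (frame_al_w frame).
rewrite (frame_al_u frame) mulr1 add0r => cal.
by have := s_avoids i; rewrite -beE invrK mulrC -cal eqxx.
Qed.

End Frames.

Section FixedPointsOnLine.
Variables (R : numClosedFieldType) (d : nat) (F : 'I_3 -> nat -> nat -> R).
Variables (a al be : 'rV[R]_3) (u w : 'cV[R]_3).
Hypothesis frame : line_frame a al be u w.
Hypothesis l_inv : line_invariant d F a.
Hypothesis w_nonfixed : ~ is_fixed d F w.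

Let g1 := restr_form d F u w al.
Let g2 := restr_form d F u w be.

Definition fixed_poly : {poly R} := g2 - 'X * g1.
Definition index_numerator : {poly R} := (d.+2)%:R *: g1 - restr_trace d F u w.

Lemma lform_al_chart x : lform al (chart u w x) = 1.
Proof. by rewrite lformD lformZ (frame_al_u frame) (frame_al_w frame) mulr0 addr0. Qed.

Lemma lform_be_chart x : lform be (chart u w x) = x.
Proof. by rewrite lformD lformZ (frame_be_u frame) (frame_be_w frame) mulr1 add0r. Qed.

Lemma lform_a_chart x : lform a (chart u w x) = 0.
Proof. by rewrite lformD lformZ (frame_a_u frame) (frame_a_w frame) mulr0 addr0. Qed.

Lemma chart_neq0 x : chart u w x != 0.
Proof.
by apply/eqP => /(congr1 (lform al)); rewrite lform_al_chart lform0; apply/eqP/oner_neq0.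
Qed.

Lemma chart_proportional x y c : chart u w x = c *: chart u w y -> x = y.
Proof.
move=> e; have := congr1 (lform be) e; have := congr1 (lform al) e.
by rewrite !lformZ !lform_al_chart !lform_be_chart mulr1 => <-; rewrite mul1r.
Qed.

Lemma Fmap_chart x : Fmap d F (chart u w x) = g1.[x] *: u + g2.[x] *: w.
Proof.
rewrite /g1 /g2 !horner_restr_form; apply: (frame_decomp frame).
by apply: l_inv; rewrite ?chart_neq0 ?lform_a_chart.
Qed.

Lemma root_fixed_polyP x : root fixed_poly x <-> is_fixed d F (chart u w x).
Proof.
rewrite /root /fixed_poly !hornerE subr_eq0; split => [/eqP g2x | [c Fc]].
  by exists g1.[x]; rewrite Fmap_chart g2x /chart scalerDr scalerA mulrC.
have := congr1 (lform be) Fc; have := congr1 (lform al) Fc.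
rewrite -!horner_restr_form -/g1 -/g2 !lformZ lform_al_chart lform_be_chart mulr1.
by move=> -> ->; rewrite mulrC.
Qed.

Lemma is_fixedZ g v : g != 0 -> is_fixed d F (g *: v) -> is_fixed d F v.
Proof.
move=> g_neq0 [c Fc]; exists (c * g / g ^+ d); apply: (scalerI (expf_neq0 d g_neq0)).
by rewrite -FmapZ Fc !scalerA; congr (_ *: _); field; rewrite expf_neq0.
Qed.

Lemma fixed_point_chart p : p != 0 -> lform a p = 0 -> is_fixed d F p ->
  lform al p != 0 /\ p = lform al p *: chart u w (lform be p / lform al p).
Proof.
move=> p_neq0 ap0 p_fixed; have pE := frame_decomp frame ap0.
have al_neq0 : lform al p != 0.
  apply/eqP => al0; rewrite al0 scale0r add0r in pE.
  have be_neq0 : lform be p != 0 by apply: contraNneq p_neq0 => be0; rewrite pE be0 scale0r.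
  by apply: w_nonfixed; apply: (is_fixedZ be_neq0); rewrite -pE.
split=> //; rewrite {1}pE /chart scalerDr scalerA mulrC divfK //.
Qed.

Lemma lform_al_Fmap_w_neq0 : lform al (Fmap d F w) != 0.
Proof.
apply/eqP => al0; apply: w_nonfixed; exists (lform be (Fmap d F w)).
rewrite {1}(frame_decomp frame (l_inv (line_frame_w_neq0 frame) (frame_a_w frame))).
by rewrite al0 scale0r add0r.
Qed.

Lemma coef_fixed_poly_top : fixed_poly`_d.+1 = - lform al (Fmap d F w).
Proof.
have [sg2 _] := restr_form_top d F u w be; have [_ g1d] := restr_form_top d F u w al.
by rewrite coefB coefXM /= -/g1 [g2`__]nth_default // sub0r g1d.
Qed.

Lemma size_fixed_poly : size fixed_poly = d.+2.
Proof.
have [sg2 _] := restr_form_top d F u w be; have [sg1 _] := restr_form_top d F u w al.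
apply/anti_leq/andP; split.
  rewrite (leq_trans (size_polyD _ _)) // geq_max size_polyN (leq_trans sg2) //=.
  by rewrite mulrC (leq_trans (size_polyMleq _ _)) // size_polyX addn2.
rewrite ltnNge; apply: contra lform_al_Fmap_w_neq0 => /leq_sizeP/(_ _ (leqnn _)).
by rewrite coef_fixed_poly_top => /eqP; rewrite oppr_eq0.
Qed.

Lemma index_numerator_top :
  (size index_numerator <= d.+1)%N /\ index_numerator`_d = (d.+2)%:R * lform al (Fmap d F w).
Proof.
have [sg1 g1d] := restr_form_top d F u w al.
split; last by rewrite coefB coefZ -/g1 g1d [_`_d]nth_default ?size_restr_trace ?subr0.
rewrite (leq_trans (size_polyD _ _)) // geq_max size_polyN.
by rewrite (leq_trans (size_scale_leq _ _)) // (leq_trans (size_restr_trace _ _ _ _)).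
Qed.

Lemma tangent_eigenvalue x c lam t (om : 'cV[R]_3) :
  Fmap d F (chart u w x) = c *: chart u w x -> c != 0 ->
  lform a om = 0 -> ~ proportional om (chart u w x) ->
  c^-1 *: Jac d F (chart u w x) *m om = lam *: om + t *: chart u w x ->
  lform (be - x *: al) (Jac d F (chart u w x) *m w) = c * lam.
Proof.
move=> Fc c_neq0 aom om_np Mom; set v := chart u w x in Fc om_np Mom *.
(* [ell] vanishes at [v] and equals [1] at [w]: it is the tangent coordinate of [l] at [[v]]. *)
set ell := be - x *: al.
have ell_v : lform ell v = 0 by rewrite lformBl lform_be_chart lform_al_chart mulr1 subrr.
have Mv : c^-1 *: Jac d F v *m v = d%:R *: v.
  by rewrite -scalemxAl Jac_euler Fc !scalerA mulrCA mulVf ?mulr1.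
have omE : om = lform al om *: v + lform ell om *: w.
  rewrite {1}(frame_decomp frame aom) lformBl /v /chart.
  by apply: col3P; rewrite !coordE; ring.
have ell_om : lform ell om != 0.
  by apply/eqP => ell0; apply: om_np; exists (lform al om); rewrite {1}omE ell0 scale0r addr0.
have := congr1 (lform ell) Mom; rewrite {1}omE mulmxDr -!scalemxAr Mv.
rewrite !lformD !lformZ -scalemxAl lformZ ell_v !mulr0 add0r addr0 mulrC.
by move=> /(mulIf ell_om) <-; rewrite mulrA mulfV ?mul1r.
Qed.

Lemma horner_deriv_fixed_poly x :
  fixed_poly^`().[x] = lform (be - x *: al) (Jac d F (chart u w x) *m w) - g1.[x].
Proof.
rewrite /fixed_poly derivB derivM derivX !hornerE lformBl.
by rewrite /g1 /g2 !horner_deriv_restr_form; ring.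
Qed.

Lemma fixed_point_index p lam mu :
  p != 0 -> lform a p = 0 -> Df_eigenvalues d F a p lam mu -> lam != 1 ->
  let r := lform be p / lform al p in
  [/\ root fixed_poly r, fixed_poly^`().[r] != 0 &
      (1 - mu) / (1 - lam) = -1 - index_numerator.[r] / fixed_poly^`().[r]].
Proof.
move=> p_neq0 ap0 eig lam_neq1 r.
have [al_neq0 pE] := fixed_point_chart p_neq0 ap0 (Df_eigenvalues_fixed eig).
have := Df_eigenvaluesZ (invr_neq0 al_neq0) eig.
have -> : (lform al p)^-1 *: p = chart u w r by rewrite {2}pE scalerA mulVf ?scale1r.
set v := chart u w r; case=> c [c_neq0 [Fv /= [cp [om [aom [om_np [t Mom]]]]]]].
have g1r : g1.[r] = c by rewrite /g1 horner_restr_form Fv lformZ lform_al_chart mulr1.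
have dphi : fixed_poly^`().[r] = c * (lam - 1).
  by rewrite horner_deriv_fixed_poly (tangent_eigenvalue Fv c_neq0 aom om_np Mom) g1r; ring.
have trE : (restr_trace d F u w).[r] = c * (d%:R + lam + mu).
  rewrite horner_restr_trace -(mxtrace_char_poly3 cp) mxtraceZ mulrA mulfV ?mul1r //.
split.
- by apply/root_fixed_polyP; exists c.
- by rewrite dphi mulf_neq0 // subr_eq0.
- rewrite dphi /index_numerator !hornerE trE g1r -[d.+2]addn2 natrD.
  by field; rewrite c_neq0 !subr_eq0 lam_neq1 eq_sym lam_neq1.
Qed.

Lemma sum_fixed_point_indices k (p : 'I_k -> 'cV[R]_3) (lam mu : 'I_k -> R) :
  (forall i, p i != 0) -> (forall i, lform a (p i) = 0) ->
  (forall i j, proportional (p i) (p j) -> i = j) ->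
  (forall v, v != 0 -> lform a v = 0 -> is_fixed d F v -> exists i, proportional v (p i)) ->
  (forall i, Df_eigenvalues d F a (p i) (lam i) (mu i)) -> (forall i, lam i != 1) ->
  \sum_i (1 - mu i) / (1 - lam i) = 1.
Proof.
move=> p_neq0 p_on p_inj cover eig lam_neq1.
pose r i := lform be (p i) / lform al (p i).
have loc i := fixed_point_index (p_neq0 i) (p_on i) (eig i) (lam_neq1 i).
have chartE i : lform al (p i) != 0 /\ p i = lform al (p i) *: chart u w (r i).
  exact: fixed_point_chart (Df_eigenvalues_fixed (eig i)).
have r_inj : injective r.
  move=> i j rij; apply: p_inj; exists (lform al (p i) / lform al (p j)).
  have [_ pi] := chartE i; have [alj pj] := chartE j.
  by rewrite {1}pi {2}pj rij scalerA divfK.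
have phi_roots z : root fixed_poly z -> exists i, z = r i.
  move/root_fixed_polyP/(cover _ (chart_neq0 z) (lform_a_chart z)) => [i [c ci]].
  exists i; have [_ pi] := chartE i; apply: (@chart_proportional _ _ (c * lform al (p i))).
  by rewrite ci {1}pi scalerA.
have phi_neq0 : fixed_poly != 0 by rewrite -size_poly_eq0 size_fixed_poly.
have phiE := prod_simple_roots phi_neq0 r_inj phi_roots
  (fun i => let: And3 h _ _ := loc i in h) (fun i => let: And3 _ h _ := loc i in h).
have kE : k = d.+1.
  apply/eqP; rewrite -eqSS -size_fixed_poly phiE size_scale ?lead_coef_eq0 //.
  by rewrite size_prod_XsubC_ord.
have [size_num num_d] := index_numerator_top.
under eq_bigr => i _ do rewrite (let: And3 _ _ h := loc i in h).
rewrite sumrB sumr_const card_ord.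
rewrite (sum_horner_div_deriv r_inj _ phiE) ?lead_coef_eq0 ?kE // num_d.
rewrite lead_coefE size_fixed_poly coef_fixed_poly_top -[d.+2]addn2 -addn1 !natrD.
by field; apply: lform_al_Fmap_w_neq0.
Qed.

End FixedPointsOnLine.

Theorem mainTheorem5 (R : numClosedFieldType) (d : nat)
    (F : 'I_3 -> nat -> nat -> R) (a : 'rV[R]_3)
    (k : nat) (p : 'I_k -> 'cV[R]_3) (lam mu : 'I_k -> R) :
  holo_map d F ->
  a != 0 ->
  line_invariant d F a ->
  (* p_1, ..., p_k are fixed points of f|_l ... *)
  (forall i, p i != 0 /\ lform a (p i) = 0 /\ is_fixed d F (p i)) ->
  (* ... pairwise distinct ... *)
  (forall i j, proportional (p i) (p j) -> i = j) ->
  (* ... and they are all the fixed points of f|_l *)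
  (forall v, v != 0 -> lform a v = 0 -> is_fixed d F v ->
     exists i, proportional v (p i)) ->
  (* lam i, mu i: eigenvalues of Df at p i, lam i tangent to l *)
  (forall i, Df_eigenvalues d F a (p i) (lam i) (mu i)) ->
  (* all fixed points of f|_l are simple *)
  (forall i, lam i != 1) ->
  \sum_(i < k) (1 - mu i) / (1 - lam i) = 1.
Proof.
move=> _ a_neq0 l_inv p_fixed p_inj cover eig lam_neq1.
have [al [be [u [w frame]]]] := exists_line_frame a_neq0.
have [s w_nonfixed] := exists_nonfixed frame cover.
have frame' := line_frame_shift s frame.
by apply: (sum_fixed_point_indices frame' l_inv w_nonfixed _ _ p_inj cover eig lam_neq1)
  => i; case: (p_fixed i) => [? []].
Qed.
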